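(* Let $G$ be a bipartite graph with parts $A,B$, $|A|=|B|=N$, and let $d\in(0,1]$, $\theta>0$. Suppose every vertex of $G$ has degree at least $(1-\theta)dN$ and every two distinct vertices in the same part have at most $(1+\theta)d^2N$ common neighbours. Consider $N\to\infty$ with $\theta\to0$ and $\theta^{4/3}d^2N\to\infty$. Then, for $N$ sufficiently large, $G$ contains a collection of $(1-\theta^{1/3})dN$ pairwise edge-disjoint perfect matchings. *)

From Stdlib Require Export Reals.
From mathcomp Require Export all_boot.
From mathcomp Require Export perm.
Set Implicit Arguments. Unset Strict Implicit. Unset Printing Implicit Defensive.

(* A bipartite graph with parts A = 'I_N and B = 'I_N is given by its
   bi-adjacency relation adj : 'I_N -> 'I_N -> bool  (adj a b = ab is an edge). *)

Definition degA (N : nat) (adj : 'I_N -> 'I_N -> bool) (a : 'I_N) : nat :=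
  #|[set b : 'I_N | adj a b]|.
Definition degB (N : nat) (adj : 'I_N -> 'I_N -> bool) (b : 'I_N) : nat :=
  #|[set a : 'I_N | adj a b]|.
Definition codegA (N : nat) (adj : 'I_N -> 'I_N -> bool) (a a' : 'I_N) : nat :=
  #|[set b : 'I_N | adj a b && adj a' b]|.
Definition codegB (N : nat) (adj : 'I_N -> 'I_N -> bool) (b b' : 'I_N) : nat :=
  #|[set a : 'I_N | adj a b && adj a b']|.

Definition perfect_matching (N : nat) (adj : 'I_N -> 'I_N -> bool)
  (s : {perm 'I_N}) : Prop := forall a : 'I_N, adj a (s a).

Definition edge_disjoint (N : nat) (s t : {perm 'I_N}) : Prop :=
  forall a : 'I_N, s a <> t a.

(* Write B for the second part, e(X, Y) for the number of edges between X and
   Y, and t = theta^(1/6).  By an Ore-type criterion, m edge-disjoint perfect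
   matchings exist once every vertex of B has degree at least m and
   m (|X| + |Y|) <= e(X, Y) + m N for all X, Y: Hall's theorem on an auxiliary
   graph gives an m-factor, and Hall's theorem again peels it into m perfect
   matchings.  The inequality is trivial for |X| + |Y| <= N.  Otherwise let f b
   be the number of neighbours of b in X; the codegree bound controls the sum
   of the f b ^ 2, hence the variance of f around its mean d |X|, so by
   Cauchy-Schwarz few edges leave X for B \ Y, which gives the inequality for
   m = (1 - t^2) d N. *)

From Stdlib Require Import Reals Lra Psatz ZArith.
From mathcomp Require Import all_boot perm zify.

Set Implicit Arguments.
Unset Strict Implicit.
Unset Printing Implicit Defensive.

Section HallMarriage.
Variables (T1 T2 : finType) (r : T1 -> T2 -> bool).

Definition neighbours (R : {set T2}) (S : {set T1}) : {set T2} :=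
  [set y in R | [exists x in S, r x y]].

Lemma neighboursP (R : {set T2}) (S : {set T1}) y :
  reflect (y \in R /\ exists2 x, x \in S & r x y) (y \in neighbours R S).
Proof.
rewrite inE; apply: (iffP andP) => [[yR /existsP[x /andP[xS rxy]]]|[yR [x xS rxy]]].
  by split=> //; exists x.
by split=> //; apply/existsP; exists x; rewrite xS.
Qed.

Lemma neighbours_sub (R : {set T2}) (S : {set T1}) : neighbours R S \subset R.
Proof. by apply/subsetP => y /neighboursP[]. Qed.

Definition hall_condition (L : {set T1}) (R : {set T2}) : Prop :=
  forall S : {set T1}, S \subset L -> #|S| <= #|neighbours R S|.

Definition matching (f : T1 -> T2) (L : {set T1}) (R : {set T2}) : Prop :=
  (forall x, x \in L -> f x \in R /\ r x (f x)) /\ {in L &, injective f}.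

Lemma matching_glue (L S : {set T1}) (R1 R2 : {set T2}) f1 f2 :
  [disjoint R1 & R2] -> matching f1 S R1 -> matching f2 (L :\: S) R2 ->
  matching (fun x => if x \in S then f1 x else f2 x) (S :|: L) (R1 :|: R2).
Proof.
move=> dR [f1P f1I] [f2P f2I].
have LS x : x \notin S -> x \in S :|: L -> x \in L :\: S.
  by rewrite !inE => /negbTE-> /=.
have f12 x y : x \in S -> y \in S :|: L -> y \notin S -> f1 x <> f2 y.
  move=> xS yL yS e; have := (f2P y (LS y yS yL)).1.
  by rewrite -e (disjointFr dR (f1P x xS).1).
split=> [x xL|x y xL yL /=].
  case: ifPn => xS; rewrite inE.
    by case: (f1P x xS) => -> ->.
  by case: (f2P x (LS x xS xL)) => -> ->; rewrite orbT.
case: ifPn => xS; case: ifPn => yS.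
- exact: f1I.
- by move=> /f12; case.
- by move=> /esym /f12; case.
- by apply: f2I; apply: LS.
Qed.

Lemma matching_split (L S : {set T1}) (R R1 R2 : {set T2}) f1 f2 :
  S \subset L -> [disjoint R1 & R2] -> R1 :|: R2 \subset R ->
  matching f1 S R1 -> matching f2 (L :\: S) R2 -> exists f, matching f L R.
Proof.
move=> sSL dR sR m1 m2; exists (fun x => if x \in S then f1 x else f2 x).
have [fP fI] := matching_glue dR m1 m2; rewrite (setUidPr sSL) in fP fI.
by split=> // x xL; have [fxR rxf] := fP x xL; rewrite (subsetP sR).
Qed.

Lemma hall_condition_tight_in (L S : {set T1}) (R : {set T2}) :
  hall_condition L R -> S \subset L -> hall_condition S (neighbours R S).
Proof.
move=> hallL sSL S' sS'S; apply: leq_trans (hallL S' (subset_trans sS'S sSL)) _.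
apply/subset_leq_card/subsetP => y /neighboursP[yR [x xS' rxy]].
have xS := subsetP sS'S x xS'.
by apply/neighboursP; split; [apply/neighboursP; split; last exists x | exists x].
Qed.

Lemma hall_condition_tight_out (L S : {set T1}) (R : {set T2}) :
  hall_condition L R -> S \subset L -> #|neighbours R S| <= #|S| ->
  hall_condition (L :\: S) (R :\: neighbours R S).
Proof.
move=> hallL sSL tight T sT.
have dTS : [disjoint T & S].
  rewrite disjoint_subset; apply: subset_trans sT _.
  by apply/subsetP => x; rewrite !inE => /andP[].
have sTSN :
    neighbours R (T :|: S) \subset neighbours (R :\: neighbours R S) T :|: neighbours R S.
  apply/subsetP => y /neighboursP[yR [x xTS rxy]]; rewrite inE.
  case: (boolP (y \in neighbours R S)) => yN; rewrite ?orbT //.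
  apply/orP; left; apply/neighboursP; split; first by rewrite inE yN.
  exists x => //; move: xTS; rewrite inE => /orP[//|xS].
  by case/negP: yN; apply/neighboursP; split=> //; exists x.
have sTL : T \subset L := subset_trans sT (subsetDl L S).
have /eqP cTS : #|T :|: S| == #|T| + #|S| by rewrite (leq_card_setU T S).2.
have sTSL : T :|: S \subset L by rewrite subUset sTL sSL.
have := hallL _ sTSL.
have := leq_trans (subset_leq_card sTSN) (leq_card_setU _ _).1.
rewrite cTS; lia.
Qed.

Lemma hall_condition_surplus (L : {set T1}) (R : {set T2}) x0 y1 :
  (forall S : {set T1}, S \subset L -> S != set0 -> S != L ->
     #|S| < #|neighbours R S|) ->
  x0 \in L -> hall_condition (L :\ x0) (R :\ y1).
Proof.
move=> surplus x0L T sT.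
have [->|T0] := eqVneq T set0; first by rewrite cards0.
have sTL : T \subset L := subset_trans sT (subD1set L x0).
have TL : T != L.
  by apply: contraTneq sT => ->; apply/subsetPn; exists x0; rewrite ?inE ?eqxx.
have sN : neighbours R T \subset y1 |: neighbours (R :\ y1) T.
  apply/subsetP => y /neighboursP[yR [x xT rxy]]; rewrite in_setU1.
  case: eqVneq => //= ne; apply/neighboursP; split; last by exists x.
  by rewrite !inE ne.
have := leq_trans (subset_leq_card sN) (leq_card_setU _ _).1.
have := surplus T sTL T0 TL; rewrite cards1; lia.
Qed.

Theorem hall_marriage (y0 : T2) (L : {set T1}) (R : {set T2}) :
  hall_condition L R -> exists f, matching f L R.
Proof.
have [n ltLn] := ubnP #|L|; elim: n => // n IH in L R ltLn *; move=> hallL.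
have [->|[x0 x0L]] := set_0Vmem L.
  by exists (fun=> y0); split=> x; rewrite inE.
case: (boolP [exists S : {set T1},
  [&& S \subset L, S != set0, S != L & #|neighbours R S| <= #|S|]]).
  case/existsP => S /and4P[sSL S0 SL tight].
  have pSL : S \proper L by rewrite properEneq SL.
  have [f1 m1] : exists f, matching f S (neighbours R S).
    apply: IH (hall_condition_tight_in hallL sSL).
    by have := proper_card pSL; lia.
  have [f2 m2] : exists f, matching f (L :\: S) (R :\: neighbours R S).
    apply: IH (hall_condition_tight_out hallL sSL tight).
    have := subset_leq_card sSL; have := S0.
    by rewrite -card_gt0 cardsDS //; lia.
  apply: matching_split sSL _ _ m1 m2; last by rewrite subUset neighbours_sub subsetDl.
  by rewrite disjoint_subset; apply/subsetP => y; rewrite !inE => ->.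
rewrite negb_exists => /forallP noTight.
have surplus (S : {set T1}) :
    S \subset L -> S != set0 -> S != L -> #|S| < #|neighbours R S|.
  by move=> sSL S0 SL; have := noTight S; rewrite sSL S0 SL /= -ltnNge.
have : 0 < #|neighbours R [set x0]|.
  by apply: leq_trans (hallL _ _); rewrite ?cards1 ?sub1set.
case/card_gt0P => y1 /neighboursP[y1R [_ /set1P-> rx0y1]].
have [f2 m2] : exists f, matching f (L :\ x0) (R :\ y1).
  apply: IH (hall_condition_surplus y1 surplus x0L).
  by move: ltLn; rewrite (cardsD1 x0 L) x0L.
apply: (matching_split (R1 := [set y1]) (f1 := fun=> y1) _ _ _ _ m2); rewrite ?sub1set //.
- by rewrite disjoint_subset; apply/subsetP => y; rewrite !inE => /eqP->; rewrite eqxx.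
- by apply/subsetP => y; rewrite !inE => /orP[/eqP->|/andP[]].
- by split=> [x /set1P->|x y /set1P-> /set1P->]; rewrite ?set11.
Qed.
End HallMarriage.

Lemma card_set_sum (T : finType) (P : pred T) : #|[set x | P x]| = \sum_x P x.
Proof. by rewrite -sum1dep_card big_mkcond; apply: eq_bigr => x _; case: (P x). Qed.

Lemma card_set_sum_in (T : finType) (A : {set T}) (P : pred T) :
  #|[set x in A | P x]| = \sum_(x in A) P x.
Proof. by rewrite card_set_sum [RHS]big_mkcond; apply: eq_bigr => x _; case: (x \in A). Qed.

Section SemiregularDecomposition.
Variable T : finType.

Lemma semiregular_hall k (F : T -> T -> bool) : 0 < k ->
  (forall a, #|[set b | F a b]| = k) -> (forall b, #|[set a | F a b]| <= k) ->
  hall_condition F setT setT.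
Proof.
move=> k0 degF degF' S _; rewrite -(leq_pmul2l k0).
have -> : k * #|S| = \sum_(a in S) \sum_b F a b.
  by rewrite mulnC -sum_nat_const; apply: eq_bigr => a _; rewrite -card_set_sum degF.
rewrite exchange_big (bigID (mem (neighbours F setT S))) /=.
rewrite [X in _ + X]big1 ?addn0 => [|b bN]; last first.
  apply: big1 => a aS; apply/eqP; rewrite eqb0; apply: contra bN => Fab.
  by apply/neighboursP; split; [rewrite inE | exists a].
rewrite mulnC -sum_nat_const leq_sum // => b _.
apply: leq_trans (degF' b); rewrite card_set_sum [X in _ <= X](bigID (mem S)).
exact: leq_addr.
Qed.

Lemma semiregular_perm k (F : T -> T -> bool) : 0 < k ->
  (forall a, #|[set b | F a b]| = k) -> (forall b, #|[set a | F a b]| <= k) ->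
  exists s : {perm T}, forall a, F a (s a).
Proof.
move=> k0 degF degF'; case: (pickP (@predT T)) => [y0 _|T0]; last first.
  by exists 1%g => a; have := T0 a.
have [f [fP fI]] := hall_marriage y0 (semiregular_hall k0 degF degF').
have finj : injective f by move=> x y; apply: fI; rewrite inE.
by exists (perm finj) => a; rewrite permE; case: (fP a (in_setT a)).
Qed.

Theorem semiregular_decomposition k (F : T -> T -> bool) :
  (forall a, #|[set b | F a b]| = k) -> (forall b, #|[set a | F a b]| <= k) ->
  exists M : 'I_k -> {perm T},
    (forall i a, F a (M i a)) /\ (forall i j, i <> j -> forall a, M i a <> M j a).
Proof.
elim: k F => [|k IH] F degF degF'.
  by exists (fun=> 1%g); split=> -[].
have [s sF] := semiregular_perm (ltn0Sn k) degF degF'.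
pose F' a b := F a b && (s a != b).
have degF'A a : #|[set b | F' a b]| = k.
  have -> : [set b | F' a b] = [set b | F a b] :\ s a.
    by apply/setP => b; rewrite !inE andbC eq_sym.
  by have := cardsD1 (s a) [set b | F a b]; rewrite inE sF degF add1n => -[].
have degF'B b : #|[set a | F' a b]| <= k.
  have -> : [set a | F' a b] = [set a | F a b] :\ (s^-1 b)%g.
    by apply/setP => a; rewrite !inE /F' (can2_eq (permK s) (permKV s)) andbC.
  have Fb : F (s^-1 b)%g b by rewrite -{2}(permKV s b) sF.
  have := cardsD1 (s^-1 b)%g [set a | F a b]; rewrite inE Fb add1n.
  by move: (degF' b) => /[swap] ->.
have [M' [M'F M'D]] := IH F' degF'A degF'B.
exists (fun i => if unlift ord_max i is Some j then M' j else s); split.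
  move=> i a; case: (unliftP ord_max i) => [j _|_] //.
  by case/andP: (M'F j a).
move=> i j; case: (unliftP ord_max i) => [i' ->|->];
  case: (unliftP ord_max j) => [j' ->|->] // ne a.
- by apply: M'D => ei; apply: ne; rewrite ei.
- by move=> e; case/andP: (M'F i' a); rewrite e eqxx.
- by move=> e; case/andP: (M'F j' a); rewrite e eqxx.
Qed.

End SemiregularDecomposition.

Lemma card_set_sumType (T U : finType) (S : {set T + U}) :
  #|S| = #|[set x | inl x \in S]| + #|[set y | inr y \in S]|.
Proof.
have -> : #|S| = \sum_u (u \in S) by rewrite -card_set_sum; apply: eq_card => u; rewrite inE.
by rewrite big_sumType !card_set_sum.
Qed.

Lemma card_set_pair (T U : finType) (P : T -> U -> bool) :
  #|[set p : T * U | P p.1 p.2]| = \sum_a #|[set b | P a b]|.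
Proof.
rewrite card_set_sum -(pair_bigA _ (fun a b => P a b : nat)).
by apply: eq_bigr => a _; rewrite card_set_sum.
Qed.

Lemma card_ord_ltn N m : #|[set j : 'I_N | j < m]| = minn N m.
Proof.
rewrite card_set_sum; elim: N => [|N IH]; first by rewrite big_ord0 min0n.
by rewrite big_ord_recr /= IH; case: (ltnP N m); lia.
Qed.

Definition cross_edges N (adj : 'I_N -> 'I_N -> bool) (X Y : {set 'I_N}) : nat :=
  #|[set p : 'I_N * 'I_N | [&& p.1 \in X, p.2 \in Y & adj p.1 p.2]]|.

(* With Y' the complement of Y this reads k |X| <= e(X, Y') + k |B \ Y'|,
   the classical criterion for a k-factor. *)
Definition ore_condition N (adj : 'I_N -> 'I_N -> bool) (k : nat) : Prop :=
  forall X Y : {set 'I_N}, k * (#|X| + #|Y|) <= cross_edges adj X Y + k * N.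

Lemma degB_le N (adj : 'I_N -> 'I_N -> bool) b : degB adj b <= N.
Proof. by apply: leq_trans (max_card _) _; rewrite card_ord. Qed.

Lemma sum_degB N (adj : 'I_N -> 'I_N -> bool) (Z : {set 'I_N}) :
  \sum_(p : 'I_N * 'I_N) ((p.2 \in Z) && adj p.1 p.2) = \sum_(b in Z) degB adj b.
Proof.
rewrite -(pair_bigA _ (fun a b => (b \in Z) && adj a b : nat)) exchange_big.
rewrite [RHS]big_mkcond; apply: eq_bigr => b _.
case: (b \in Z); last exact: big1.
by rewrite /degB card_set_sum.
Qed.

Section OreFactor.
Variables (N : nat) (adj : 'I_N -> 'I_N -> bool) (k : nat).
Hypothesis degB_ge : forall b, k <= degB adj b.
Hypothesis ore : ore_condition adj k.

(* Hall's theorem is applied to an auxiliary bipartite graph whose right side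
   is the edge set of adj: every a gets k copies inl (a, i), every b gets
   degB b - k dummies inr (b, j), and each slot is joined to the edges at its
   vertex.  A matching saturating all slots gives every a exactly k edges,
   while the dummies use up all but at most k of the edges at every b. *)
Let slot : finType := ('I_N * 'I_k + 'I_N * 'I_N)%type.
Let slots : {set slot} :=
  [set u : slot | if u is inr q then q.2 < degB adj q.1 - k else true].
Let edges : {set 'I_N * 'I_N} := [set p | adj p.1 p.2].
Let incident (u : slot) (p : 'I_N * 'I_N) : bool :=
  match u with inl q => p.1 == q.1 | inr q => p.2 == q.1 end.

Let copies (S : {set slot}) := [set a | [exists i, inl (a, i) \in S]].
Let dummies (S : {set slot}) := [set b | [exists j, inr (b, j) \in S]].

Lemma slots_card (S : {set slot}) : S \subset slots ->
  #|S| <= #|copies S| * k + \sum_(b in dummies S) (degB adj b - k).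
Proof.
move=> sS; rewrite card_set_sumType; apply: leq_add.
  rewrite -[k in _ * k]card_ord -cardsT -cardsX; apply: subset_leq_card.
  by apply/subsetP => -[a i]; rewrite !inE /= andbT => Sai; apply/existsP; exists i.
pose P b (j : 'I_N) := (b \in dummies S) && (j < degB adj b - k).
apply: (@leq_trans #|[set q | P q.1 q.2]|).
  apply/subset_leq_card/subsetP => -[b j]; rewrite !inE /P /= => Sbj.
  have := subsetP sS _ Sbj; rewrite inE /= => ->; rewrite andbT.
  by rewrite inE; apply/existsP; exists j.
rewrite card_set_pair [X in _ <= X]big_mkcond leq_sum // => b _.
rewrite /P; case: (b \in dummies S) => /=.
  by rewrite card_ord_ltn geq_minr.
by rewrite leqn0 cards_eq0; apply/eqP/setP => j; rewrite !inE.
Qed.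

Lemma slots_neighbours (S : {set slot}) :
  cross_edges adj (copies S) (~: dummies S) + \sum_(b in dummies S) degB adj b
    <= #|neighbours incident edges S|.
Proof.
set X := copies S; set Z := dummies S.
apply: (@leq_trans #|[set p : 'I_N * 'I_N | adj p.1 p.2 && ((p.1 \in X) || (p.2 \in Z))]|).
  rewrite /cross_edges !card_set_sum -sum_degB -big_split leq_sum // => p _.
  by rewrite in_setC; case: (p.1 \in X); case: (p.2 \in Z); case: (adj p.1 p.2).
apply/subset_leq_card/subsetP => p; rewrite inE => /andP[ap /orP[]];
  rewrite inE => /existsP[i Si]; apply/neighboursP; split; rewrite ?inE //.
  by exists (inl (p.1, i)) => //=.
by exists (inr (p.2, i)) => //=.
Qed.

Lemma slots_hall : hall_condition incident slots edges.
Proof.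
move=> S sS; apply: leq_trans (slots_card sS) _; apply: leq_trans (slots_neighbours S).
set X := copies S; set Z := dummies S.
have oreXZ : k * #|X| <= cross_edges adj X (~: Z) + k * #|Z|.
  have cZ : #|Z| + #|~: Z| = N by rewrite cardsC card_ord.
  have : k * (#|X| + #|~: Z|) <= cross_edges adj X (~: Z) + k * (#|Z| + #|~: Z|).
    by rewrite cZ; apply: ore.
  by rewrite !mulnDr addnA leq_add2r.
have -> : \sum_(b in Z) degB adj b = \sum_(b in Z) (degB adj b - k) + #|Z| * k.
  by rewrite -sum_nat_const -big_split; apply: eq_bigr => b _; rewrite /= subnK.
lia.
Qed.

Section FactorOfMatching.
Variable f : slot -> 'I_N * 'I_N.
Hypothesis fM : matching incident f slots edges.

Let factor a b := [exists i : 'I_k, f (inl (a, i)) == (a, b)].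

Let copy_in_slots a i : inl (a, i) \in slots. Proof. by rewrite inE. Qed.

Lemma factor_sub a b : factor a b -> adj a b.
Proof. by case/existsP => i /eqP e; have := (fM.1 _ (copy_in_slots a i)).1; rewrite e inE. Qed.

Lemma factor_degA a : #|[set b | factor a b]| = k.
Proof.
have f1 i : (f (inl (a, i))).1 = a by apply/eqP; exact: (fM.1 _ (copy_in_slots a i)).2.
have -> : [set b | factor a b] = [set (f (inl (a, i))).2 | i in [set: 'I_k]].
  apply/setP => b; rewrite inE; apply/existsP/imsetP => [[i /eqP e]|[i _ ->]].
    by exists i; rewrite ?inE // e.
  by exists i; rewrite [X in X == _]surjective_pairing f1.
rewrite card_imset ?cardsT ?card_ord // => i j e.
have : f (inl (a, i)) = f (inl (a, j)).
  by rewrite [LHS]surjective_pairing [RHS]surjective_pairing e !f1.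
by move/(fM.2 _ _ (copy_in_slots a i) (copy_in_slots a j)) => [].
Qed.

Lemma factor_degB b : #|[set a | factor a b]| <= k.
Proof.
set W := [set u in slots | (f u).2 == b].
have cW : #|W| <= degB adj b.
  rewrite -(card_in_imset (f := f) (D := W)); last first.
    by move=> u v /setIdP[uL _] /setIdP[vL _]; apply: fM.2.
  apply: (@leq_trans #|[set p : 'I_N * 'I_N | (p.2 == b) && adj p.1 p.2]|).
    apply/subset_leq_card/subsetP => p /imsetP[u /setIdP[uL /eqP e] ->].
    by rewrite inE e eqxx /=; have := (fM.1 u uL).1; rewrite inE e.
  rewrite (card_set_pair (fun a b' => (b' == b) && adj a b')) /degB card_set_sum.
  apply: leq_sum => a _; rewrite card_set_sum (bigD1 b) //= eqxx big1 ?addn0 //.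
  by move=> b' /negbTE->.
have cWr : degB adj b - k <= #|[set y | inr y \in W]|.
  pose P b' (j : 'I_N) := (b' == b) && (j < degB adj b' - k).
  apply: (@leq_trans #|[set q | P q.1 q.2]|).
    rewrite (card_set_pair P) (bigD1 b) //= big1 ?addn0 => [|b' nb].
      rewrite /P eqxx card_ord_ltn leq_min leqnn andbT.
      exact: leq_trans (leq_subr _ _) (degB_le _ _).
    by apply/eqP; rewrite cards_eq0; apply/eqP/setP => j; rewrite !inE /P (negbTE nb).
  apply/subset_leq_card/subsetP => -[b' j]; rewrite !inE /P /= => /andP[/eqP-> jl].
  have uL : inr (b, j) \in slots by rewrite inE.
  by rewrite jl; have := (fM.1 _ uL).2.
have cWl : #|[set a | factor a b]| <= #|[set x | inl x \in W]|.
  apply: leq_trans (leq_imset_card fst _); apply/subset_leq_card/subsetP => a.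
  rewrite inE => /existsP[i /eqP e]; apply/imsetP; exists (a, i) => //.
  by rewrite !inE e eqxx andbT.
apply: leq_trans cWl _; rewrite -(leq_add2r #|[set y | inr y \in W]|).
by apply: leq_trans (_ : _ <= degB adj b) _; rewrite -?card_set_sumType // -leq_subLR.
Qed.

End FactorOfMatching.

Lemma ore_kfactor : exists F : 'I_N -> 'I_N -> bool, (forall a b, F a b -> adj a b) /\
  (forall a, #|[set b | F a b]| = k) /\ (forall b, #|[set a | F a b]| <= k).
Proof.
case: (pickP (@predT ('I_N * 'I_N))) => [p0 _|noN]; last first.
  by exists adj; split=> //; split=> a; have := noN (a, a).
have [f fM] := hall_marriage p0 slots_hall.
exists (fun a b => [exists i : 'I_k, f (inl (a, i)) == (a, b)]).
by split; [exact: factor_sub fM|split; [exact: factor_degA fM|exact: factor_degB fM]].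
Qed.

End OreFactor.

Theorem ore_matchings N (adj : 'I_N -> 'I_N -> bool) k :
  (forall b, k <= degB adj b) -> ore_condition adj k ->
  exists M : 'I_k -> {perm 'I_N}, (forall i, perfect_matching adj (M i)) /\
    (forall i j, i <> j -> edge_disjoint (M i) (M j)).
Proof.
move=> degB_ge ore; have [F [Fadj [FA FB]]] := ore_kfactor degB_ge ore.
have [M [MF MD]] := semiregular_decomposition FA FB.
by exists M; split=> // i a; apply: Fadj.
Qed.

Lemma nat_cauchy_schwarz (T : finType) (A : {set T}) (g : T -> nat) :
  (\sum_(i in A) g i) ^ 2 <= #|A| * \sum_(i in A) g i ^ 2.
Proof.
rewrite -(leq_pmul2l (isT : 0 < 2)).
have -> : 2 * (\sum_(i in A) g i) ^ 2 = \sum_(i in A) \sum_(j in A) 2 * (g i * g j).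
  rewrite expnS expn1 big_distrlr big_distrr; apply: eq_bigr => i _.
  by rewrite big_distrr.
have -> : 2 * (#|A| * \sum_(i in A) g i ^ 2) =
          \sum_(i in A) \sum_(j in A) (g i ^ 2 + g j ^ 2).
  rewrite mul2n -addnn.
  transitivity (\sum_(i in A) (#|A| * g i ^ 2 + \sum_(j in A) g j ^ 2)).
    by rewrite big_split -big_distrr sum_nat_const.
  by apply: eq_bigr => i _; rewrite big_split sum_nat_const.
by apply: leq_sum => i _; apply: leq_sum => j _; apply: leq_of_leqif (nat_Cauchy _ _).
Qed.

Section EdgeCounting.
Variables (N : nat) (adj : 'I_N -> 'I_N -> bool).

Definition degB_in (X : {set 'I_N}) (b : 'I_N) : nat := #|[set a in X | adj a b]|.

Lemma cross_edges_sum (X Y : {set 'I_N}) :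
  cross_edges adj X Y = \sum_(b in Y) degB_in X b.
Proof.
rewrite /cross_edges card_set_sum.
rewrite -(pair_bigA _ (fun a b => [&& a \in X, b \in Y & adj a b] : nat)) exchange_big.
rewrite [RHS]big_mkcond; apply: eq_bigr => b _; rewrite /degB_in card_set_sum_in.
case: (b \in Y); last by apply: big1 => a _; rewrite andbF; case: (a \in X).
by rewrite [RHS]big_mkcond; apply: eq_bigr => a _; case: (a \in X).
Qed.

Lemma sum_degA (X : {set 'I_N}) : \sum_(a in X) degA adj a = \sum_b degB_in X b.
Proof.
transitivity (\sum_(a in X) \sum_b (adj a b : nat)).
  by apply: eq_bigr => a _; rewrite /degA card_set_sum.
by rewrite exchange_big; apply: eq_bigr => b _; rewrite /degB_in card_set_sum_in.
Qed.

Lemma cross_edgesC (X Y : {set 'I_N}) :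
  cross_edges adj X Y + cross_edges adj X (~: Y) = \sum_(a in X) degA adj a.
Proof.
rewrite sum_degA !cross_edges_sum [RHS](bigID (mem Y)); congr (_ + _).
by apply: eq_bigl => b; rewrite in_setC.
Qed.

Lemma sum_degB_in_mul (X1 X2 : {set 'I_N}) :
  \sum_b degB_in X1 b * degB_in X2 b = \sum_(a in X1) \sum_(a' in X2) codegA adj a a'.
Proof.
transitivity (\sum_b \sum_(a in X1) \sum_(a' in X2) ((adj a b : nat) * adj a' b)).
  by apply: eq_bigr => b _; rewrite /degB_in !card_set_sum_in big_distrlr.
rewrite exchange_big; apply: eq_bigr => a _; rewrite exchange_big.
apply: eq_bigr => a' _; rewrite /codegA card_set_sum; apply: eq_bigr => b _.
by case: (adj a b); case: (adj a' b).
Qed.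

Lemma sum_degB_in1 a : \sum_b degB_in [set a] b = degA adj a.
Proof. by rewrite -sum_degA big_set1. Qed.

Lemma sum_codegA_row a :
  \sum_(a' in [set: 'I_N]) codegA adj a a' = \sum_b degB_in [set a] b * degB adj b.
Proof.
transitivity (\sum_b degB_in [set a] b * degB_in [set: 'I_N] b).
  by rewrite sum_degB_in_mul big_set1.
by apply: eq_bigr => b _; congr (_ * _); apply: eq_card => a'; rewrite !inE.
Qed.

Lemma codegA_diag a : codegA adj a a = degA adj a.
Proof. by apply: eq_card => b; rewrite !inE andbb. Qed.

End EdgeCounting.

Lemma cross_edges_transpose N (adj : 'I_N -> 'I_N -> bool) (X Y : {set 'I_N}) :
  cross_edges (fun b a => adj a b) Y X = cross_edges adj X Y.
Proof.
rewrite /cross_edges !card_set_sum.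
rewrite -(pair_bigA _ (fun b a => [&& b \in Y, a \in X & adj a b] : nat)).
rewrite -(pair_bigA _ (fun a b => [&& a \in X, b \in Y & adj a b] : nat)) exchange_big.
by apply: eq_bigr => a _; apply: eq_bigr => b _; case: (a \in X); case: (b \in Y).
Qed.

Section RealSums.
Local Open Scope R_scope.
Variables (I : finType) (P : pred I).

Lemma INR_sum (F : I -> nat) :
  INR (\sum_(i | P i) F i) = \big[Rplus/0]_(i | P i) INR (F i).
Proof. exact: (big_morph INR plus_INR). Qed.

Lemma Rsum_le (F G : I -> R) : (forall i, P i -> F i <= G i) ->
  \big[Rplus/0]_(i | P i) F i <= \big[Rplus/0]_(i | P i) G i.
Proof. by move=> FG; apply: big_ind2 => [|? ? ? ? ? ?|]; [lra | lra | apply: FG]. Qed.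

Lemma Rsum_mulr (F : I -> R) (c : R) :
  \big[Rplus/0]_(i | P i) (F i * c) = (\big[Rplus/0]_(i | P i) F i) * c.
Proof.
by apply: (big_ind2 (fun r s => r = s * c)) => [|? ? ? ? -> ->|//]; ring.
Qed.

Lemma Rsum_const (c : R) : \big[Rplus/0]_(i | P i) c = INR (\sum_(i | P i) 1) * c.
Proof.
rewrite INR_sum -Rsum_mulr; apply: eq_bigr => i _; rewrite /=; ring.
Qed.

End RealSums.

Local Open Scope R_scope.

Lemma INR_sqr (k : nat) : INR (k ^ 2)%N = INR k ^ 2.
Proof. by rewrite expnS expn1 mult_INR /=; ring. Qed.

(* With e = sum_(b in Y) f b, e' = sum_(b notin Y) f b, S2 = sum_b f b^2,
   Q = sum_(b notin Y) f b^2, m = |Y| and y = |B \ Y|, the right-hand side is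
   y * sum_b (f b - mu)^2; the Cauchy-Schwarz bound on Y shows that the part
   of that variance sum coming from Y is nonnegative. *)
Lemma deviation_from_mean (e e' E S2 Q y m mu : R) :
  0 <= y -> 0 < m -> e + e' = E -> e' ^ 2 <= y * Q -> e ^ 2 <= m * (S2 - Q) ->
  (e' - mu * y) ^ 2 <= y * (S2 - 2 * mu * E + mu ^ 2 * (m + y)).
Proof.
move=> y0 m0 eE cs' cs.
have inY : 0 <= (S2 - Q) - 2 * mu * e + mu ^ 2 * m.
  have : (e - mu * m) ^ 2 <= m * ((S2 - Q) - 2 * mu * e + mu ^ 2 * m) by nra.
  have := pow2_ge_0 (e - mu * m); nra.
have := Rmult_le_pos _ _ y0 inY; rewrite -eE; nra.
Qed.

Section OreInequality.
Variables (t d n : R).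
Hypothesis t_small : 0 < t <= /100.
Hypothesis d_range : 0 < d <= 1.
Hypothesis t8D_ge1 : 1 <= t ^ 8 * (d * n).

Lemma t6_le : 0 < t ^ 6 <= / 1000000000000.
Proof.
have [t0 t1] := t_small; split; first exact: pow_lt.
by apply: Rle_trans (pow_incr t (/100) 6 _) _; rewrite /=; lra.
Qed.

Lemma t6dn_ge1 : 1 <= t ^ 6 * (d * n).
Proof.
have e : t ^ 8 * (d * n) = t ^ 2 * (t ^ 6 * (d * n)) by ring.
have : 0 < t ^ 2 <= 1 by split; nra.
nra.
Qed.

Lemma dn_pos : 0 < d * n.
Proof. by have := t6dn_ge1; have [t6 _] := t6_le; nra. Qed.

Lemma t2dn_large : 1000000000000 <= t ^ 2 * (d * n).
Proof.
have e8 : t ^ 8 * (d * n) = t ^ 6 * (t ^ 2 * (d * n)) by ring.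
have := t8D_ge1; rewrite e8 => hK; have [t6 t6le] := t6_le.
apply: Rnot_lt_le => h; have : t ^ 6 * (t ^ 2 * (d * n)) < 1; last lra.
apply: Rle_lt_trans (_ : / 1000000000000 * (t ^ 2 * (d * n)) < 1); last lra.
by apply: Rmult_le_compat_r; nra.
Qed.

Lemma degree_margin : (1 - t ^ 2) * (d * n) + 1 <= (1 - t ^ 6) * (d * n).
Proof.
have [t0 t1] := t_small; have := t2dn_large; have := dn_pos.
have : t ^ 6 <= t ^ 2 / 2.
  rewrite (_ : t ^ 6 = t ^ 2 * (t ^ 2 * t ^ 2)); last ring.
  have t2 : 0 < t ^ 2 <= / 10000 by split; nra.
  have t4 : t ^ 2 * t ^ 2 <= / 2 by nra.
  by have := Rmult_le_compat_l _ _ _ (Rlt_le _ _ (proj1 t2)) t4; lra.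
nra.
Qed.

(* With x = |X| and y = |B \ Y|, the bound e(X, Y) >= ((1 - t^2) d n + 1) (x - y)
   holds as soon as e(X, B \ Y) exceeds its mean d x y by at most this slack. *)
Definition ore_slack (x y : R) : R :=
  x * (1 - t ^ 6) * (d * n) - d * x * y - ((1 - t ^ 2) * (d * n) + 1) * (x - y).

Let g := t ^ 6 + 3 * t ^ 3.
Let al := (t ^ 2 - g) * (d * n) - 1.

Lemma g_small : 0 <= g <= t ^ 2 / 25.
Proof.
have [t0 t1] := t_small; have [t6 _] := t6_le.
have t2 : 0 < t ^ 2 <= / 10000 by split; nra.
have t3 : 0 < t ^ 3 <= t ^ 2 / 100 by rewrite (_ : t ^ 3 = t * t ^ 2); [split; nra | ring].
have : t ^ 6 <= t ^ 3 by rewrite (_ : t ^ 6 = t ^ 3 * t ^ 3); [nra | ring].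
by rewrite /g; split; lra.
Qed.

Lemma al_large : 9 / 10 * (t ^ 2 * (d * n)) <= al.
Proof. by have := g_small; have := t2dn_large; rewrite /al; nra. Qed.

Lemma ore_slack_ge x y : 0 <= y -> 1 <= x - y -> x <= n - y ->
  3 * t ^ 3 * (d * n) * x <= ore_slack x y.
Proof.
move=> y0 s1 xn; have [d0 d1] := d_range; have := t2dn_large.
have D0 := dn_pos; have [g0 g1] := g_small; have hal := al_large.
have -> : ore_slack x y =
    3 * t ^ 3 * (d * n) * x + ((x - y) * al + y * (d * (n - x) - g * (d * n))).
  by rewrite /ore_slack /al /g; ring.
set D := d * n in D0 hal *; set s := x - y; set x' := n - x.
have n0 : 0 < n by rewrite /D in D0; nra.
suff : 0 <= s * al + y * (d * x' - g * D) by lra.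
(* The term y (d x' - g D) is negative only if fewer than g n vertices lie
   outside X, hence outside Y; then s = x - y is almost n. *)
have [h|h] := Rle_lt_dec (g * D) (d * x').
  have : 0 <= s * al by apply: Rmult_le_pos; rewrite /s; nra.
  have : 0 <= y * (d * x' - g * D) by apply: Rmult_le_pos; lra.
  lra.
have x'g : x' <= g * n by rewrite /D in h; nra.
have yx' : y <= x' by rewrite /x'; lra.
have : y * (d * x' - g * D) >= - (g * n) * (g * D).
  have : 0 <= y * (d * x') by apply: Rmult_le_pos; rewrite /x'; nra.
  have : y * (g * D) <= (g * n) * (g * D) by apply: Rmult_le_compat_r; nra.
  nra.
have gn : g * n <= / 4 * n.
  by have [t0 t1] := t_small; apply: Rmult_le_compat_r; nra.
have n2 : n / 2 <= s by rewrite /s /x' in x'g yx' *; lra.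
have : n / 2 * (9 / 10 * (t ^ 2 * D)) <= s * al by apply: Rmult_le_compat; nra.
have : (g * n) * (g * D) <= n * D * (t ^ 2 / 10).
  rewrite (_ : (g * n) * (g * D) = n * D * (g * g)); last by ring.
  by apply: Rmult_le_compat_l; nra.
have : 0 <= n * D * t ^ 2 by apply: Rmult_le_pos; nra.
nra.
Qed.

Lemma ore_slack_sq x y : 0 <= y -> 1 <= x - y -> x <= n - y ->
  y * (2 * x * (d * n) + 3 * t ^ 6 * x ^ 2 * d * (d * n)) <= ore_slack x y ^ 2.
Proof.
move=> y0 s1 xn; have G := ore_slack_ge y0 s1 xn.
have [t0 t1] := t_small; have [d0 d1] := d_range; have hT6 := t6dn_ge1.
set D := d * n in G hT6 *; set B := 2 * x * D + 3 * t ^ 6 * x ^ 2 * d * D.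
have t6 : 0 < t ^ 6 by apply: pow_lt.
have D0 : 0 < D by nra.
have dxD : d * x <= D by rewrite /D; nra.
have B0 : 0 <= B.
  rewrite (_ : B = x * D * (2 + 3 * t ^ 6 * (x * d))); last by rewrite /B; ring.
  have xd : 0 <= x * d by nra.
  by apply: Rmult_le_pos; nra.
have : y * B <= x * B by apply: Rmult_le_compat_r; lra.
have : x * B <= 2 * x ^ 2 * D + 3 * t ^ 6 * x ^ 2 * D * D.
  by rewrite /B; have := pow2_ge_0 x; nra.
have : 2 * x ^ 2 * D + 3 * t ^ 6 * x ^ 2 * D * D <= (3 * t ^ 3 * D * x) ^ 2.
  have -> : (3 * t ^ 3 * D * x) ^ 2 = 9 * (t ^ 6 * D) * D * x ^ 2 by ring.
  have : 0 <= x ^ 2 * D * (6 * (t ^ 6 * D) - 2).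
    by apply: Rmult_le_pos; [have := pow2_ge_0 x; nra | lra].
  lra.
have : (3 * t ^ 3 * D * x) ^ 2 <= ore_slack x y ^ 2.
  have t3 : 0 < t ^ 3 by apply: pow_lt.
  by apply: pow_incr; split=> //; apply: Rmult_le_pos; nra.
lra.
Qed.

Lemma ore_inequality x y E e e' S2 Q : 0 <= y -> 1 <= x - y -> x <= n - y ->
  e + e' = E -> e' ^ 2 <= y * Q -> e ^ 2 <= (n - y) * (S2 - Q) ->
  x * (1 - t ^ 6) * (d * n) <= E ->
  S2 <= x * (2 * (d * n)) + x ^ 2 * ((1 + t ^ 6) * d ^ 2 * n) ->
  ((1 - t ^ 2) * (d * n) + 1) * (x - y) <= e.
Proof.
move=> y0 s1 xn eE cs' cs El S2u.
have [d0 d1] := d_range.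
have ny : 0 < n - y by lra.
have dev := deviation_from_mean (d * x) y0 ny eE cs' cs.
have x0 : 0 <= d * x by nra.
have var : S2 - 2 * (d * x) * E + (d * x) ^ 2 * (n - y + y) <=
           2 * x * (d * n) + 3 * t ^ 6 * x ^ 2 * d * (d * n).
  have : 2 * (d * x) * (x * (1 - t ^ 6) * (d * n)) <= 2 * (d * x) * E.
    by apply: Rmult_le_compat_l; lra.
  nra.
have G0 : 0 <= ore_slack x y.
  apply: Rle_trans (ore_slack_ge y0 s1 xn); have [t0 _] := t_small.
  have : 0 < t ^ 3 by apply: pow_lt.
  have t6 : 0 < t ^ 6 by apply: pow_lt.
  have : 0 < d * n by have := t6dn_ge1; nra.
  by move=> ? ?; apply: Rmult_le_pos; nra.
have sq : (e' - d * x * y) ^ 2 <= ore_slack x y ^ 2.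
  apply: Rle_trans dev _; apply: Rle_trans (ore_slack_sq y0 s1 xn).
  by apply: Rmult_le_compat_l.
have : e' - d * x * y <= ore_slack x y by apply: Rnot_lt_le => h; nra.
rewrite /ore_slack; lra.
Qed.

End OreInequality.

Section PseudorandomBounds.
Variables (N : nat) (adj : 'I_N -> 'I_N -> bool) (t d : R).
Hypothesis t_small : 0 < t <= /100.
Hypothesis d_range : 0 < d <= 1.
Hypothesis t8D_ge1 : 1 <= t ^ 8 * (d * INR N).
Hypothesis degA_ge : forall a, (1 - t ^ 6) * d * INR N <= INR (degA adj a).
Hypothesis degB_ge : forall b, (1 - t ^ 6) * d * INR N <= INR (degB adj b).
Hypothesis codegA_le : forall a a', a <> a' ->
  INR (codegA adj a a') <= (1 + t ^ 6) * d ^ 2 * INR N.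

Let c2 := (1 + t ^ 6) * d ^ 2 * INR N.

Lemma sum_codegA_le (X : {set 'I_N}) a : a \in X ->
  INR (\sum_(a' in X) codegA adj a a') <= INR (degA adj a) + INR #|X| * c2.
Proof.
move=> aX; rewrite (bigD1 a aX) plus_INR codegA_diag; apply: Rplus_le_compat_l.
rewrite INR_sum; apply: Rle_trans (Rsum_le (G := fun=> c2) _) _.
  by move=> a' /andP[_ ne]; apply: codegA_le => ea; rewrite ea eqxx in ne.
rewrite Rsum_const; apply: Rmult_le_compat_r.
  rewrite /c2; apply: Rmult_le_pos (pos_INR N); apply: Rmult_le_pos (pow2_ge_0 d).
  by have := pow_lt t 6 (proj1 t_small); lra.
by apply/le_INR/leP; rewrite -sum1_card (bigD1 a aX) leq_addl.
Qed.

Lemma degA_le a : INR (degA adj a) <= 2 * (d * INR N).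
Proof.
have key : INR (degA adj a) * ((1 - t ^ 6) * d * INR N) <= INR (degA adj a) + INR N * c2.
  have := sum_codegA_le (in_setT a); rewrite cardsT card_ord; apply: Rle_trans.
  rewrite sum_codegA_row -sum_degB_in1 !INR_sum -Rsum_mulr; apply: Rsum_le => b _.
  by rewrite mult_INR; apply: Rmult_le_compat_l; [exact: pos_INR | exact: degB_ge].
have [t0 t1] := t_small; have A0 := pos_INR (degA adj a).
have t6 := t6_le t_small.
have D100 : 100 <= d * INR N.
  have := t2dn_large t_small t8D_ge1; have := dn_pos t_small d_range t8D_ge1.
  have : t ^ 2 <= 1 by nra.
  nra.
set A := INR (degA adj a) in key A0 *; set D := d * INR N in D100 *.
have {}key : A * ((1 - t ^ 6) * D - 1) <= (1 + t ^ 6) * D * D.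
  by rewrite /c2 /D in key *; lra.
apply: Rnot_lt_le => A2D.
have : 2 * D * ((1 - t ^ 6) * D - 1) < A * ((1 - t ^ 6) * D - 1).
  by apply: Rmult_lt_compat_r; nra.
nra.
Qed.

Lemma sum_degA_ge (X : {set 'I_N}) :
  INR #|X| * (1 - t ^ 6) * (d * INR N) <= INR (\sum_(a in X) degA adj a).
Proof.
rewrite INR_sum; apply: Rle_trans (Rsum_le (P := fun a => a \in X) (fun a _ => degA_ge a)).
by rewrite Rsum_const sum1_card; right; ring.
Qed.

Lemma sum_degB_in_sq_le (X : {set 'I_N}) :
  INR (\sum_b degB_in adj X b ^ 2) <= INR #|X| * (2 * (d * INR N)) + INR #|X| ^ 2 * c2.
Proof.
have -> : (\sum_b degB_in adj X b ^ 2 = \sum_(a in X) \sum_(a' in X) codegA adj a a')%N.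
  by rewrite -sum_degB_in_mul; apply: eq_bigr => b _; rewrite expnS expn1.
rewrite INR_sum; apply: Rle_trans (Rsum_le (P := fun a => a \in X)
  (G := fun=> 2 * (d * INR N) + INR #|X| * c2) _) _.
  move=> a aX; apply: Rle_trans (sum_codegA_le aX) _.
  by apply: Rplus_le_compat_r; apply: degA_le.
by rewrite Rsum_const sum1_card; right; ring.
Qed.

Lemma cross_edges_ge (X Y : {set 'I_N}) : (#|X| <= #|Y|)%N -> (N < #|X| + #|Y|)%N ->
  ((1 - t ^ 2) * (d * INR N) + 1) * INR (#|X| + #|Y| - N) <= INR (cross_edges adj X Y).
Proof.
move=> XY XYN.
have cY : (#|Y| + #|~: Y| = N)%N by rewrite cardsC card_ord.
have cYR : INR N = INR #|Y| + INR #|~: Y|.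
  by rewrite -plus_INR; congr INR; rewrite -[LHS]cY.
have sq : (\sum_b degB_in adj X b ^ 2 =
           \sum_(b in Y) degB_in adj X b ^ 2 + \sum_(b in ~: Y) degB_in adj X b ^ 2)%N.
  by rewrite (bigID (mem Y)); congr addn; apply: eq_bigl => b; rewrite in_setC.
have -> : INR (#|X| + #|Y| - N) = INR #|X| - INR #|~: Y|.
  have -> : (#|X| + #|Y| - N = #|X| - #|~: Y|)%N by lia.
  by rewrite minus_INR //; apply/leP; lia.
apply: (ore_inequality (e' := INR (cross_edges adj X (~: Y)))
  (Q := INR (\sum_(b in ~: Y) degB_in adj X b ^ 2)) t_small d_range t8D_ge1 (pos_INR _) _ _ _ _ _
  (sum_degA_ge X) (sum_degB_in_sq_le X)).
- by rewrite -minus_INR; [apply: (le_INR 1); apply/leP | apply/leP]; lia.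
- by rewrite cYR; have /leP/le_INR := XY; lra.
- by rewrite -plus_INR; congr INR; apply: cross_edgesC.
- rewrite -INR_sqr -mult_INR; apply/le_INR/leP.
  by rewrite cross_edges_sum; apply: nat_cauchy_schwarz.
- rewrite cYR sq plus_INR !Rplus_minus_r -INR_sqr -mult_INR; apply/le_INR/leP.
  by rewrite cross_edges_sum; apply: nat_cauchy_schwarz.
Qed.

Lemma ore_condition_half m (X Y : {set 'I_N}) :
  INR m <= (1 - t ^ 2) * (d * INR N) + 1 -> (#|X| <= #|Y|)%N ->
  (m * (#|X| + #|Y|) <= cross_edges adj X Y + m * N)%N.
Proof.
move=> hm XY; case: (leqP (#|X| + #|Y|) N) => XYN.
  by apply: leq_trans (leq_mul (leqnn m) XYN) (leq_addl _ _).
rewrite -(subnK (ltnW XYN)) mulnDr leq_add2r; apply/leP/INR_le; rewrite mult_INR.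
apply: Rle_trans (cross_edges_ge XY XYN).
exact: Rmult_le_compat_r (pos_INR _) hm.
Qed.

End PseudorandomBounds.

Lemma ore_condition_of_bounds N (adj : 'I_N -> 'I_N -> bool) (t d : R) (m : nat) :
  0 < t <= /100 -> 0 < d <= 1 -> 1 <= t ^ 8 * (d * INR N) ->
  (forall a, (1 - t ^ 6) * d * INR N <= INR (degA adj a)) ->
  (forall b, (1 - t ^ 6) * d * INR N <= INR (degB adj b)) ->
  (forall a a', a <> a' -> INR (codegA adj a a') <= (1 + t ^ 6) * d ^ 2 * INR N) ->
  (forall b b', b <> b' -> INR (codegB adj b b') <= (1 + t ^ 6) * d ^ 2 * INR N) ->
  INR m <= (1 - t ^ 2) * (d * INR N) + 1 -> ore_condition adj m.
Proof.
move=> ht hd hK hA hB hcA hcB hm X Y; case: (leqP #|X| #|Y|)%N => XY.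
  exact: (ore_condition_half (adj := adj) ht hd hK hA hB hcA hm XY).
rewrite [(#|X| + _)%N]addnC -cross_edges_transpose.
exact: (ore_condition_half (adj := fun b a => adj a b) ht hd hK hB hA hcB hm (ltnW XY)).
Qed.

Lemma Rpower_pow_mul (x y : R) (k : nat) : 0 < x -> Rpower x y ^ k = Rpower x (y * INR k).
Proof. by move=> x0; rewrite -Rpower_pow ?Rpower_mult //; apply: exp_pos. Qed.

Lemma sixth_root_parameters (th d n : R) :
  0 < th <= (/100) ^ 6 -> 0 < d <= 1 -> Rpower th (4/3) * d ^ 2 * n >= 1 ->
  exists t, [/\ 0 < t <= /100, th = t ^ 6, Rpower th (1/3) = t ^ 2
              & 1 <= t ^ 8 * (d * n)].
Proof.
move=> [th0 th1] [d0 d1] hK; exists (Rpower th (1/6)).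
have t_pow k : Rpower th (1/6) ^ k = Rpower th (INR k / 6).
  by rewrite Rpower_pow_mul //; congr Rpower; lra.
have t0 : 0 < Rpower th (1/6) by apply: exp_pos.
split=> //.
- split=> //; have <- : Rpower ((/100) ^ 6) (1/6) = /100.
    rewrite -Rpower_pow ?Rpower_mult; last lra.
    by rewrite (_ : INR 6 * (1/6) = 1) ?Rpower_1 //; [lra | rewrite /INR; field].
  by apply: Rle_Rpower_l; lra.
- by rewrite t_pow (_ : INR 6 / 6 = 1) ?Rpower_1 // /INR; field.
- by rewrite t_pow; congr Rpower; rewrite /INR; field.
- rewrite t_pow (_ : INR 8 / 6 = 4/3); last by rewrite /INR; field.
  have : 0 < Rpower th (4/3) by apply: exp_pos.
  have : 0 < d ^ 2 by apply: pow_lt.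
  nra.
Qed.

Lemma exists_nat_between (r : R) : 0 <= r -> exists m : nat, r <= INR m <= r + 1.
Proof.
move=> r0; have [h1 h2] := archimed r.
have z0 : (0 <= up r)%Z by apply: le_IZR; lra.
by exists (Z.to_nat (up r)); rewrite INR_IZR_INZ Z2Nat.id //; lra.
Qed.

Theorem lemma6 :
  exists (theta0 K : R) (N0 : nat), (0 < theta0)%R /\
  forall (N : nat) (d theta : R) (adj : 'I_N -> 'I_N -> bool),
    (N0 <= N)%N ->
    (0 < d <= 1)%R ->
    (0 < theta <= theta0)%R ->
    (Rpower theta (4/3) * d ^ 2 * INR N >= K)%R ->
    (forall a : 'I_N, INR (degA adj a) >= (1 - theta) * d * INR N)%R ->
    (forall b : 'I_N, INR (degB adj b) >= (1 - theta) * d * INR N)%R ->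
    (forall a a' : 'I_N, a <> a' ->
       INR (codegA adj a a') <= (1 + theta) * d ^ 2 * INR N)%R ->
    (forall b b' : 'I_N, b <> b' ->
       INR (codegB adj b b') <= (1 + theta) * d ^ 2 * INR N)%R ->
    exists (m : nat) (M : 'I_m -> {perm 'I_N}),
      (INR m >= (1 - Rpower theta (1/3)) * d * INR N)%R /\
      (forall k : 'I_m, perfect_matching adj (M k)) /\
      (forall k k' : 'I_m, k <> k' -> edge_disjoint (M k) (M k')).
Proof.
(* K = 1 already forces d N >= 10^12, so no separate bound N0 is needed. *)
exists ((/100) ^ 6), 1, 0%N; split; first by apply: pow_lt; lra.
move=> N d th adj _ hd hth hK degA_ge degB_ge codegA_le codegB_le.
have [t [ht eth e2 hK']] := sixth_root_parameters hth hd hK.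
rewrite {}eth in degA_ge degB_ge codegA_le codegB_le.
have [m [m_lo m_hi]] : exists m : nat,
    (1 - t ^ 2) * (d * INR N) <= INR m <= (1 - t ^ 2) * (d * INR N) + 1.
  apply/exists_nat_between/Rmult_le_pos; first by have [t0 t1] := ht; nra.
  by apply: Rmult_le_pos; [lra | exact: pos_INR].
have degB_m b : (m <= degB adj b)%N.
  apply/leP/INR_le; apply: Rle_trans m_hi _.
  by apply: Rle_trans (degree_margin ht hd hK') _; have := degB_ge b; lra.
have ore : ore_condition adj m.
  by apply: ore_condition_of_bounds ht hd hK' _ _ codegA_le codegB_le m_hi => x;
    [have := degA_ge x | have := degB_ge x]; lra.
have [M [MP MD]] := ore_matchings degB_m ore.
by exists m, M; rewrite e2; split=> //; lra.
Qed.
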